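(* Let $\Phi:\mathbb{R}^2\to\mathbb{R}$, $\Phi(x)=W^{(1)}\mathrm{ReLU}(W^{(0)}x+b^{(0)})+b^{(1)}$, be a random shallow ReLU network of width $N=3$, where $W^{(0)}\in\mathbb{R}^{3\times 2}$ has i.i.d. $\mathcal{N}(0,2/3)$ entries, $W^{(1)}\in\mathbb{R}^{1\times 3}$ has i.i.d. $\mathcal{N}(0,1)$ entries, $b^{(0)}_i\sim\mathcal{D}^{(0)}_i$, $b^{(1)}\sim\mathcal{D}^{(1)}_1$ for arbitrary probability distributions on $\mathbb{R}$, all jointly independent. Let $\widetilde{\Phi}(x)=W^{(1)}(W^{(0)}x+b^{(0)})+b^{(1)}$ and let $C>0$ be arbitrary. Then with positive probability $\mathrm{Lip}(\Phi)>C\cdot\mathrm{Lip}(\widetilde{\Phi})$.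
   Context: $\mathrm{ReLU}(t)=\max\{0,t\}$ componentwise; $\mathrm{Lip}(f)=\sup_{x\neq y}|f(x)-f(y)|/\|x-y\|_2$. *)

From HB Require Import structures.
From mathcomp Require Import all_boot all_order all_algebra.
From mathcomp Require Import all_classical all_reals all_analysis.
Set Implicit Arguments. Unset Strict Implicit. Unset Printing Implicit Defensive.
Import Order.TTheory GRing.Theory Num.Theory.
Local Open Scope classical_set_scope.
Local Open Scope ring_scope.

Section Defs.
Context {R : realType}.

Definition relu (t : R) : R := Num.max 0 t.

Definition norm2 (x : 'I_2 -> R) : R := Num.sqrt (\sum_(j < 2) x j ^+ 2).

Definition Lip (f : ('I_2 -> R) -> R) : \bar R :=
  ereal_sup [set r : \bar R | exists x y : 'I_2 -> R, x <> y /\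
     r = (`|f x - f y| / norm2 (fun j => x j - y j))%:E].

Definition shallow_relu (W0 : 'I_3 -> 'I_2 -> R) (W1 : 'I_3 -> R)
    (b0 : 'I_3 -> R) (b1 : R) (x : 'I_2 -> R) : R :=
  \sum_(i < 3) W1 i * relu (\sum_(j < 2) W0 i j * x j + b0 i) + b1.

Definition shallow_lin (W0 : 'I_3 -> 'I_2 -> R) (W1 : 'I_3 -> R)
    (b0 : 'I_3 -> R) (b1 : R) (x : 'I_2 -> R) : R :=
  \sum_(i < 3) W1 i * (\sum_(j < 2) W0 i j * x j + b0 i) + b1.

End Defs.

(* Mutual independence of a finite family of real random variables:
   the product rule for preimages of arbitrary Borel sets (taking
   A i = setT recovers every subfamily). *)
Definition mutually_independent {R : realType} {d : measure_display}
    {T : measurableType d} (P : probability T R) (I : finType)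
    (X : I -> T -> R) : Prop :=
  forall A : I -> set R, (forall i, measurable (A i)) ->
    P (\bigcap_(i in [set: I]) (X i @^-1` A i)) =
    (\prod_(i : I) P (X i @^-1` A i))%E.

(* Index type of the 3*2 + 3 + 3 + 1 = 13 scalar parameters. *)
Definition param_index : finType := (((('I_3 * 'I_2) + 'I_3) + 'I_3) + unit)%type.

Definition param_family {T R : Type} (W0 : 'I_3 -> 'I_2 -> T -> R)
    (W1 : 'I_3 -> T -> R) (b0 : 'I_3 -> T -> R) (b1 : T -> R)
    (k : param_index) : T -> R :=
  match k with
  | inl (inl (inl (i, j))) => W0 i j
  | inl (inl (inr i)) => W1 i
  | inl (inr i) => b0 i
  | inr _ => b1
  end.

From HB Require Import structures.
From mathcomp Require Import all_boot all_order all_algebra.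
From mathcomp Require Import all_classical all_reals all_analysis.
From mathcomp Require Import ring lra.

Set Implicit Arguments.
Unset Strict Implicit.
Unset Printing Implicit Defensive.
Import Order.TTheory GRing.Theory Num.Theory.
Local Open Scope classical_set_scope.
Local Open Scope ring_scope.

(* The input weights W0 = [[1, 0], [-1/2, 1], [-1/2, -1]] and output weights
   W1 = (1, 1, 1) satisfy W1 W0 = 0, so the linearised network is constant,
   whereas far out along the first axis only the first ReLU unit is active
   and the ReLU network has slope W1_0 W0_00 = 1 there.  Both facts survive
   small perturbations: on a box of half-width eps around this configuration
   Lip(Phi~) = O(eps) while Lip(Phi) stays close to 1.  The box has positive
   probability because Gaussian laws charge every open interval and the
   weights are independent; the biases are left unconstrained. *)

Definition i0 : 'I_3 := @Ordinal 3 0 isT.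
Definition i1 : 'I_3 := @Ordinal 3 1 isT.
Definition i2 : 'I_3 := @Ordinal 3 2 isT.
Definition j0 : 'I_2 := @Ordinal 2 0 isT.
Definition j1 : 'I_2 := @Ordinal 2 1 isT.

Lemma big_ord3 (V : nmodType) (F : 'I_3 -> V) :
  \sum_(i < 3) F i = F i0 + F i1 + F i2.
Proof.
rewrite !big_ord_recr big_ord0 /= add0r.
by congr (F _ + F _ + F _); apply: val_inj.
Qed.

Lemma big_ord2 (V : nmodType) (F : 'I_2 -> V) :
  \sum_(j < 2) F j = F j0 + F j1.
Proof.
rewrite !big_ord_recr big_ord0 /= add0r.
by congr (F _ + F _); apply: val_inj.
Qed.

Section Lipschitz.
Variable R : realType.
Implicit Types (f : ('I_2 -> R) -> R) (x y : 'I_2 -> R).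

Lemma norm2_ge_coord x j : `|x j| <= norm2 x.
Proof.
rewrite /norm2 -sqrtr_sqr ler_sqrt ?sumr_ge0 // => [|i _]; last exact: sqr_ge0.
by rewrite (bigD1 j) //= lerDl sumr_ge0 // => i _; rewrite sqr_ge0.
Qed.

Lemma Lip_ge_quotient f x y : x <> y ->
  ((`|f x - f y| / norm2 (fun j => x j - y j))%:E <= Lip f)%E.
Proof. by move=> xy; apply: ereal_sup_ubound; exists x, y. Qed.

Lemma Lip_le f (K : R) : 0 <= K ->
  (forall x y, `|f x - f y| <= K * norm2 (fun j => x j - y j)) ->
  (Lip f <= K%:E)%E.
Proof.
move=> K0 fK; apply: ge_ereal_sup => _ [x [y [_ ->]]]; rewrite lee_fin.
have [->|n0] := eqVneq (norm2 (fun j => x j - y j)) 0.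
  by rewrite invr0 mulr0.
have n_gt0 : 0 < norm2 (fun j => x j - y j).
  by rewrite lt_neqAle eq_sym n0 sqrtr_ge0.
by rewrite ler_pdivrMr.
Qed.

End Lipschitz.

Section ShallowNetworks.
Variable R : realType.

Definition shallow_lin_grad (w0 : 'I_3 -> 'I_2 -> R) (w1 : 'I_3 -> R)
    (j : 'I_2) : R :=
  \sum_(i < 3) w1 i * w0 i j.

Lemma shallow_linE w0 w1 b0 (b1 : R) x :
  shallow_lin w0 w1 b0 b1 x =
  \sum_(j < 2) shallow_lin_grad w0 w1 j * x j + (\sum_(i < 3) w1 i * b0 i + b1).
Proof.
rewrite /shallow_lin addrA; congr (_ + _).
under eq_bigr do rewrite mulrDr mulr_sumr.
rewrite big_split /= exchange_big; congr (_ + _).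
by apply: eq_bigr => j _; rewrite mulr_suml; apply: eq_bigr => i _; rewrite mulrA.
Qed.

Lemma shallow_linB w0 w1 b0 (b1 : R) x y :
  shallow_lin w0 w1 b0 b1 x - shallow_lin w0 w1 b0 b1 y =
  \sum_(j < 2) shallow_lin_grad w0 w1 j * (x j - y j).
Proof.
rewrite !shallow_linE opprD addrACA subrr addr0 -sumrB.
by apply: eq_bigr => j _; rewrite mulrBr.
Qed.

Lemma Lip_shallow_lin_le w0 w1 b0 (b1 : R) :
  (Lip (shallow_lin w0 w1 b0 b1) <=
   (\sum_(j < 2) `|shallow_lin_grad w0 w1 j|)%:E)%E.
Proof.
apply: Lip_le => [|x y]; first by rewrite sumr_ge0.
rewrite shallow_linB mulr_suml.
apply: (le_trans (ler_norm_sum _ _ _)); apply: ler_sum => j _.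
by rewrite normrM ler_wpM2l // norm2_ge_coord.
Qed.

Lemma relu_ray_active (a b c s : R) :
  c <= a -> 0 <= s -> `|b| <= c * s -> relu (a * s + b) = a * s + b.
Proof.
move=> ca s0 bc; rewrite /relu max_r //.
have := ler_wpM2r s0 ca; have : - b <= `|b| by rewrite -normrN ler_norm.
lra.
Qed.

Lemma relu_ray_inactive (a b c s : R) :
  a <= - c -> 0 <= s -> `|b| <= c * s -> relu (a * s + b) = 0.
Proof.
move=> ac s0 bc; rewrite /relu max_l //.
have := ler_wpM2r s0 ac; have := ler_norm b; rewrite mulNr; lra.
Qed.

Lemma Lip_shallow_relu_ge w0 w1 b0 (b1 c : R) : 0 < c ->
  c <= w0 i0 j0 -> w0 i1 j0 <= - c -> w0 i2 j0 <= - c ->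
  (`|w1 i0 * w0 i0 j0|%:E <= Lip (shallow_relu w0 w1 b0 b1))%E.
Proof.
move=> c_gt0 a0 a1 a2.
set s0 := (\sum_(i < 3) `|b0 i|) / c.
pose ray (s : R) (j : 'I_2) := if val j == 0%N then s else 0.
have bias_le i s : s0 <= s -> `|b0 i| <= c * s.
  move=> s0s; apply: le_trans (ler_wpM2l (ltW c_gt0) s0s).
  rewrite /s0 mulrC divfK ?gt_eqF // (bigD1 i) //= lerDl.
  by rewrite sumr_ge0.
have s0_ge0 : 0 <= s0 by rewrite /s0 divr_ge0 ?sumr_ge0 ?ltW.
have ray_eq s : s0 <= s ->
    shallow_relu w0 w1 b0 b1 (ray s) = w1 i0 * (w0 i0 j0 * s + b0 i0) + b1.
  move=> s0s; have s_ge0 := le_trans s0_ge0 s0s.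
  rewrite /shallow_relu big_ord3 !big_ord2 /ray /= !mulr0 !addr0.
  rewrite (relu_ray_active a0 s_ge0 (bias_le _ _ s0s)).
  rewrite (relu_ray_inactive a1 s_ge0 (bias_le _ _ s0s)).
  by rewrite (relu_ray_inactive a2 s_ge0 (bias_le _ _ s0s)) !mulr0 !addr0.
have ray_neq : ray s0 <> ray (s0 + 1).
  by move=> /(congr1 (fun x => x j0)); rewrite /ray /=; lra.
apply: le_trans (Lip_ge_quotient _ ray_neq).
have -> : norm2 (fun j => ray s0 j - ray (s0 + 1) j) = 1.
  rewrite /norm2 big_ord2 /ray /=.
  by rewrite (_ : (s0 - (s0 + 1)) ^+ 2 + (0 - 0) ^+ 2 = 1) ?sqrtr1 //; ring.
rewrite divr1 !ray_eq ?lerDl //.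
rewrite lee_fin (_ : _ - _ = - (w1 i0 * w0 i0 j0)) ?normrN //; ring.
Qed.

Definition target_W0 (i : 'I_3) (j : 'I_2) : R :=
  if val j == 0%N then (if val i == 0%N then 1 else - (1 / 2))
  else (if val i == 0%N then 0 else if val i == 1%N then 1 else -1).

Lemma shallow_lin_grad_near_target w0 w1 (eps : R) (j : 'I_2) :
  0 < eps <= 1 / 100 ->
  (forall i k, `|w0 i k - target_W0 i k| < eps) ->
  (forall i, `|w1 i - 1| < eps) ->
  `|shallow_lin_grad w0 w1 j| <= 9 * eps.
Proof.
move=> /andP[e0 e1] near0 near1.
have {}near0 i k : target_W0 i k - eps < w0 i k < target_W0 i k + eps.
  by rewrite -ltr_distl.
have {}near1 i : 1 - eps < w1 i < 1 + eps by rewrite -ltr_distl.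
have /andP[c0l c0u] := near1 i0; have /andP[c1l c1u] := near1 i1.
have /andP[c2l c2u] := near1 i2.
rewrite ler_norml /shallow_lin_grad big_ord3.
move: (near0 i0 j) (near0 i1 j) (near0 i2 j).
have [->|->] : j = j0 \/ j = j1.
  by case: j => [[|[|//]] ?]; [left|right]; apply: val_inj.
all: rewrite /target_W0 /= => /andP[a0l a0u] /andP[a1l a1u] /andP[a2l a2u].
all: by apply/andP; split; nra.
Qed.

Lemma Lip_gap_near_target (C eps : R) w0 w1 b0 (b1 : R) :
  0 <= C -> 0 < eps <= 1 / 100 -> C * eps <= 1 / 100 ->
  (forall i j, `|w0 i j - target_W0 i j| < eps) ->
  (forall i, `|w1 i - 1| < eps) ->
  (C%:E * Lip (shallow_lin w0 w1 b0 b1) < Lip (shallow_relu w0 w1 b0 b1))%E.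
Proof.
move=> C0 /[dup] eps_range /andP[e0 e1] Ce near0 near1.
have := near0 i0 j0; have := near0 i1 j0; have := near0 i2 j0.
have := near1 i0; rewrite /target_W0 /= !ltr_distl.
move=> /andP[c0l c0u] /andP[a2l a2u] /andP[a1l a1u] /andP[a0l a0u].
have lin_le : (C%:E * Lip (shallow_lin w0 w1 b0 b1) <= (C * (18 * eps))%:E)%E.
  rewrite EFinM lee_wpmul2l ?lee_fin //.
  apply: le_trans (Lip_shallow_lin_le _ _ _ _) _.
  rewrite lee_fin big_ord2.
  have := shallow_lin_grad_near_target j0 eps_range near0 near1.
  have := shallow_lin_grad_near_target j1 eps_range near0 near1.
  lra.
have relu_ge := @Lip_shallow_relu_ge w0 w1 b0 b1 (1 / 4).
apply: (le_lt_trans lin_le); apply: (lt_le_trans _ (relu_ge _ _ _ _)); [|lra..].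
by rewrite lte_fin ger0_norm; nra.
Qed.

End ShallowNetworks.

Lemma normal_pdf_ge (R : realType) (m s x M : R) : s != 0 ->
  `|x - m| <= M ->
  normal_peak s * expR (- M ^+ 2 / (s ^+ 2 *+ 2)) <= normal_pdf m s x.
Proof.
move=> s0 xM; rewrite /normal_pdf (negbTE s0) ler_wpM2l ?normal_peak_ge0 //.
rewrite /normal_fun ler_expR !mulNr lerN2 ler_wpM2r //.
  by rewrite invr_ge0 mulrn_wge0 // sqr_ge0.
have := ler_norm (x - m); have : - (x - m) <= `|x - m| by rewrite -normrN ler_norm.
nra.
Qed.

Lemma normal_prob_itv_gt0 (R : realType) (m s a b : R) : s != 0 -> a < b ->
  (0 < normal_prob m s [set` `]a, b[])%E.
Proof.
move=> s0 ab.
set M := `|a - m| + `|b - m|.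
set c := normal_peak s * expR (- M ^+ 2 / (s ^+ 2 *+ 2)).
have c_gt0 : 0 < c by rewrite mulr_gt0 ?expR_gt0 ?normal_peak_gt0.
apply: (@lt_le_trans _ _ (\int[lebesgue_measure]_(x in [set` `]a, b[]) c%:E)%E).
  rewrite integral_cst //= lebesgue_measure_itv /= lte_fin ab -EFinB -EFinM.
  by rewrite lte_fin mulr_gt0 // subr_gt0.
apply: ge0_le_integral => //.
- by move=> x _; rewrite lee_fin ltW.
- apply/measurable_realfun.measurable_EFinP; apply: measurable_funTS.
  exact: measurable_normal_pdf.
move=> x; rewrite /= in_itv /= => /andP[ax xb].
rewrite lee_fin normal_pdf_ge // ler_norml /M.
have := ler_norm (b - m); have : - (a - m) <= `|a - m| by rewrite -normrN ler_norm.
have := normr_ge0 (a - m); have := normr_ge0 (b - m).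
by move=> *; apply/andP; split; lra.
Qed.

Lemma mutually_independent_bigcap_gt0 (R : realType) (d : measure_display)
    (T : measurableType d) (P : probability T R) (I : finType)
    (X : I -> T -> R) (A : I -> set R) :
  mutually_independent P X -> (forall i, measurable (A i)) ->
  (forall i, 0 < P (X i @^-1` A i))%E ->
  (0 < P (\bigcap_(i in [set: I]) (X i @^-1` A i)))%E.
Proof.
move=> indep mA PA_gt0; rewrite indep //.
by apply: (big_ind (fun x => 0 < x)%E) => // x y; exact: mule_gt0.
Qed.

Theorem proposition4p7 (R : realType) (d : measure_display)
  (T : measurableType d) (P : probability T R)
  (W0 : 'I_3 -> 'I_2 -> T -> R) (W1 : 'I_3 -> T -> R)
  (b0 : 'I_3 -> T -> R) (b1 : T -> R)
  (mW0 : forall i j, measurable_fun [set: T] (W0 i j))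
  (mW1 : forall i, measurable_fun [set: T] (W1 i))
  (mb0 : forall i, measurable_fun [set: T] (b0 i))
  (mb1 : measurable_fun [set: T] b1)
  (dW0 : forall i j (A : set R), measurable A ->
     P (W0 i j @^-1` A) = normal_prob 0 (Num.sqrt (2 / 3)) A)
  (dW1 : forall i (A : set R), measurable A ->
     P (W1 i @^-1` A) = normal_prob 0 1 A)
  (indep : mutually_independent P (param_family W0 W1 b0 b1))
  (C : R) (C_gt0 : 0 < C) :
  exists A : set T, [/\ measurable A,
    A `<=` [set w | (C%:E * Lip (shallow_lin (fun i j => W0 i j w)
                       (fun i => W1 i w) (fun i => b0 i w) (b1 w))
                     < Lip (shallow_relu (fun i j => W0 i j w)
                       (fun i => W1 i w) (fun i => b0 i w) (b1 w)))%E]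
    & (0 < P A)%E].
Proof.
pose eps : R := (100 * (C + 1))^-1.
have eps_gt0 : 0 < eps by rewrite invr_gt0 mulr_gt0 // addr_gt0.
have eps_le : eps <= 1 / 100 by rewrite /eps mul1r lef_pV2 ?posrE; lra.
have Ceps_le : C * eps <= 1 / 100.
  by rewrite /eps ler_pdivrMr ?mulr_gt0 ?addr_gt0 //; lra.
pose box (k : param_index) : set R :=
  match k with
  | inl (inl (inl (i, j))) => [set` `]target_W0 R i j - eps, target_W0 R i j + eps[]
  | inl (inl (inr i)) => [set` `]1 - eps, 1 + eps[]
  | _ => setT
  end.
have mX k : measurable_fun setT (param_family W0 W1 b0 b1 k).
  by case: k => [[[[i j]|i]|i]|[]] /=.
have mbox k : measurable (box k) by case: k => [[[[i j]|i]|i]|[]] /=.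
exists (\bigcap_(k in [set: param_index]) (param_family W0 W1 b0 b1 k @^-1` box k)).
split.
- apply: fin_bigcap_measurable; first exact: finite_finset.
  by move=> k _; rewrite -[X in measurable X]setTI; exact: mX.
- move=> w in_box /=; apply: (Lip_gap_near_target (eps := eps)) => //.
  + exact: ltW.
  + by rewrite eps_gt0.
  + by move=> i j; have := in_box (inl (inl (inl (i, j)))) I; rewrite /= in_itv ltr_distl.
  + by move=> i; have := in_box (inl (inl (inr i))) I; rewrite /= in_itv ltr_distl.
- apply: mutually_independent_bigcap_gt0 => // -[[[[i j]|i]|i]|[]] /=.
  + rewrite dW0 //; apply: normal_prob_itv_gt0; last lra.
    by rewrite gt_eqF // sqrtr_gt0 divr_gt0.
  + by rewrite dW1 //; apply: normal_prob_itv_gt0 => //; lra.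
  + by rewrite preimage_setT probability_setT.
  + by rewrite preimage_setT probability_setT.
Qed.
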